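(* Let $r\geq2$ and let $\mathcal{K}$ be the class of finite $r$-uniform hypergraphs. Let $e\subseteq\mathbf{B}\in\mathcal{K}$, where $e$ is the hypergraph on $r$ vertices consisting of a single edge, and let $\mathbf{C}\in\mathcal{K}$ with $|\mathbf{C}|=N$. Then there is $\mathbf{D}\in\mathcal{K}$ extending $\mathbf{C}$ along $e\subseteq\mathbf{B}$ with $|\mathbf{D}|\leq cN^{r-1}$, where $c$ is a constant depending only on $|\mathbf{B}|$ (for the fixed $r$).
   Context: For $\mathbf{A}\subseteq\mathbf{B}$ and $\mathbf{C}\subseteq\mathbf{D}$ in $\mathcal{K}$ (induced substructures), $\mathbf{D}$ extends $\mathbf{C}$ along $\mathbf{A}\subseteq\mathbf{B}$ if $\mathbf{C}$ is a substructure of $\mathbf{D}$ and for every embedding $f:\mathbf{A}\to\mathbf{C}$ there is an embedding $h:\mathbf{B}\to\mathbf{D}$ with $h|_{\mathbf{A}}=f$. $|\mathbf{C}|$ is the number of vertices. *)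

From mathcomp Require Import all_boot.
Set Implicit Arguments. Unset Strict Implicit. Unset Printing Implicit Defensive.

(* A finite r-uniform hypergraph with n vertices is represented by its
   vertex type 'I_n and its edge set E : {set {set 'I_n}} with all edges of size r. *)
Definition uniform (r n : nat) (E : {set {set 'I_n}}) : Prop :=
  forall S, S \in E -> #|S| = r.

(* Embedding (= isomorphism onto an induced substructure). *)
Definition is_emb (m n : nat) (E1 : {set {set 'I_m}}) (E2 : {set {set 'I_n}})
  (f : 'I_m -> 'I_n) : Prop :=
  injective f /\ forall S : {set 'I_m}, (S \in E1) = (f @: S \in E2).

Definition single_edge (r : nat) : {set {set 'I_r}} := [set [set: 'I_r]].

Definition extends_along (a b c d : nat)
  (EA : {set {set 'I_a}}) (EB : {set {set 'I_b}})
  (EC : {set {set 'I_c}}) (ED : {set {set 'I_d}})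
  (i : 'I_a -> 'I_b) (j : 'I_c -> 'I_d) : Prop :=
  forall f : 'I_a -> 'I_c, is_emb EA EC f ->
    exists h : 'I_b -> 'I_d, is_emb EB ED h /\ forall x, h (i x) = j (f x).

(* For every ordered edge f = (f_1, ..., f_r) of C, glue a copy of B to C
   along f; the other vertices y of that copy are fresh vertices labelled
   (f_1, ..., f_(r-1), y), so D has at most N + |B| N^(r-1) vertices.  Two
   copies share fresh vertices only when their ordered edges agree except
   possibly at the last vertex.  That vertex then lies in no set which both
   copies map onto the same edge, and outside it the copies coincide; hence
   the edges of D are exactly the images of the edges of C and of B, and C
   and every copy of B are induced substructures. *)

From mathcomp Require Import all_boot.
Set Implicit Arguments. Unset Strict Implicit. Unset Printing Implicit Defensive.

Definition is_embedding (A B : finType) (EA : {set {set A}}) (EB : {set {set B}})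
    (f : A -> B) : Prop :=
  injective f /\ forall S : {set A}, (S \in EA) = (f @: S \in EB).

Lemma single_edge_embedding (r : nat) (T : finType) (E : {set {set T}}) (f : 'I_r -> T) :
  is_embedding (single_edge r) E f -> injective f /\ f @: setT \in E.
Proof. by case=> f_inj fE; rewrite -fE /single_edge in_set1 eqxx. Qed.

Definition relabel (W : finType) (E : {set {set W}}) : {set {set 'I_#|W|}} :=
  [set enum_rank @: S | S : {set W} in E].

Lemma relabel_uniform (W : finType) (E : {set {set W}}) r :
  (forall S, S \in E -> #|S| = r) -> forall S, S \in relabel E -> #|S| = r.
Proof.
by move=> E_unif _ /imsetP[S SE ->]; rewrite card_imset ?E_unif //; exact: enum_rank_inj.
Qed.

Lemma relabel_embedding (A W : finType) (EA : {set {set A}}) (E : {set {set W}}) (k : A -> W) :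
  is_embedding EA E k -> is_embedding EA (relabel E) (enum_rank \o k).
Proof.
case=> k_inj kE; split; first exact: inj_comp enum_rank_inj k_inj.
by move=> S; rewrite imset_comp /relabel (mem_imset _ _ (imset_inj enum_rank_inj)) kE.
Qed.

Section Amalgamation.

Variables (n : nat) (TC TB : finType).
Variables (EC : {set {set TC}}) (EB : {set {set TB}}) (i : 'I_n.+1 -> TB).
Hypothesis i_inj : injective i.

Definition ext_vertex := (TC + {ffun 'I_n -> TC} * TB)%type.

Definition preim (y : TB) : option 'I_n.+1 := [pick x | i x == y].

Definition front (f : {ffun 'I_n.+1 -> TC}) : {ffun 'I_n -> TC} :=
  [ffun k => f (lift ord_max k)].

Definition copy (f : {ffun 'I_n.+1 -> TC}) (y : TB) : ext_vertex :=
  if preim y is Some x then inl (f x) else inr (front f, y).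

Definition ordered_edge (f : {ffun 'I_n.+1 -> TC}) : bool :=
  injectiveb f && (f @: setT \in EC).

Definition ext_edges : {set {set ext_vertex}} :=
  [set inl @: S | S : {set TC} in EC] :|:
  \bigcup_(f | ordered_edge f) [set copy f @: T | T : {set TB} in EB].

Lemma preim_image x : preim (i x) = Some x.
Proof. by rewrite /preim; case: pickP => [x' /eqP/i_inj -> // | /(_ x)]; rewrite eqxx. Qed.

Lemma preim_some y x : preim y = Some x -> y = i x.
Proof. by rewrite /preim; case: pickP => // x' /eqP <- [->]. Qed.

Lemma copy_image (f : {ffun 'I_n.+1 -> TC}) x : copy f (i x) = inl (f x).
Proof. by rewrite /copy preim_image. Qed.

Lemma copy_inlP (f : {ffun 'I_n.+1 -> TC}) y z : copy f y = inl z -> exists2 x, y = i x & z = f x.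
Proof. by rewrite /copy; case E: (preim y) => [x|] // [<-]; exists x; rewrite ?(preim_some E). Qed.

Lemma copy_inr (f : {ffun 'I_n.+1 -> TC}) y p : copy f y = inr p -> p = (front f, y).
Proof. by rewrite /copy; case: (preim y) => // - []. Qed.

Lemma copy_inj (f : {ffun 'I_n.+1 -> TC}) : injective f -> injective (copy f).
Proof.
move=> f_inj y1 y2; rewrite /copy.
case E1: (preim y1) => [x1|]; case E2: (preim y2) => [x2|] //.
- by case=> /f_inj ex; rewrite (preim_some E1) (preim_some E2) ex.
- by case.
Qed.

Lemma copy_imset_range (f : {ffun 'I_n.+1 -> TC}) : copy f @: (i @: setT) = inl @: (f @: setT).
Proof. by rewrite -!imset_comp; apply: eq_imset => x /=; rewrite copy_image. Qed.

Lemma range_eq (S : {set TB}) : S \subset i @: setT -> #|S| = n.+1 -> S = i @: setT.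
Proof.
move=> S_sub S_card; apply/eqP; rewrite eqEcard S_sub /=.
by rewrite card_imset // cardsT card_ord S_card.
Qed.

Lemma copy_eq_inl (f : {ffun 'I_n.+1 -> TC}) (T : {set TB}) (S : {set TC}) :
  #|T| = n.+1 -> copy f @: T = inl @: S -> T = i @: setT.
Proof.
move=> T_card eTS; apply: range_eq T_card; apply/subsetP => y yT.
have /imsetP[z _ /copy_inlP[x -> _]] : copy f y \in inl @: S by rewrite -eTS imset_f.
exact: imset_f.
Qed.

Lemma front_max_eq (F f : {ffun 'I_n.+1 -> TC}) :
  front F = front f -> F ord_max = f ord_max -> F = f.
Proof.
move=> eFf emax; apply/ffunP => x; case: (unliftP ord_max x) => [k -> | -> //].
by move/ffunP/(_ k): eFf; rewrite !ffunE.
Qed.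

Lemma front_eq_max (F f : {ffun 'I_n.+1 -> TC}) :
  injective F -> front F = front f -> F ord_max \in f @: setT -> F ord_max = f ord_max.
Proof.
move=> F_inj eFf /imsetP[x _]; case: (unliftP ord_max x) => [k -> | -> //].
move/ffunP/(_ k): eFf; rewrite !ffunE => <- /F_inj/eqP.
by rewrite (negbTE (neq_lift _ _)).
Qed.

Lemma copy_agree (F f : {ffun 'I_n.+1 -> TC}) y :
  front F = front f -> y != i ord_max -> copy F y = copy f y.
Proof.
move=> eFf y_max; rewrite /copy; case E: (preim y) => [x|]; last by rewrite eFf.
move: y_max; rewrite (preim_some E).
case: (unliftP ord_max x) => [k -> _ | ->]; last by rewrite eqxx.
by move/ffunP/(_ k): eFf; rewrite !ffunE => ->.
Qed.

Lemma max_notin (F f : {ffun 'I_n.+1 -> TC}) (S T : {set TB}) :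
  injective F -> front F = front f -> F ord_max != f ord_max ->
  copy F @: S = copy f @: T -> i ord_max \notin S.
Proof.
move=> F_inj eFf neq_max eST; apply: contra neq_max => maxS; apply/eqP.
apply: front_eq_max => //.
have /imsetP[y _ /esym] : copy F (i ord_max) \in copy f @: T by rewrite -eST imset_f.
by rewrite copy_image => /copy_inlP[x _ ->]; exact: imset_f.
Qed.

Lemma copy_imset_same_front (F f : {ffun 'I_n.+1 -> TC}) (S T : {set TB}) :
  injective F -> injective f -> front F = front f ->
  copy F @: S = copy f @: T -> S = T.
Proof.
move=> F_inj f_inj eFf eST.
have [emax | neq_max] := eqVneq (F ord_max) (f ord_max).
  by move: eST; rewrite (front_max_eq eFf emax) => /imset_inj; apply; exact: copy_inj.
have maxT := max_notin f_inj (esym eFf) (contra_neq esym neq_max) (esym eST).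
have eT : copy F @: T = copy f @: T.
  by apply: eq_in_imset => y yT; apply: copy_agree eFf _; apply/eqP => ey; rewrite -ey yT in maxT.
by apply: (imset_inj (copy_inj F_inj)); rewrite eST eT.
Qed.

Lemma copy_front_eq (F f : {ffun 'I_n.+1 -> TC}) (S T : {set TB}) y :
  y \in S -> y \notin i @: setT -> copy F @: S = copy f @: T -> front F = front f.
Proof.
move=> yS y_new eST.
have ey : copy F y = inr (front F, y).
  by rewrite /copy; case E: (preim y) => [x|] //; rewrite (preim_some E) imset_f in y_new.
have /imsetP[y' _ /esym] : copy F y \in copy f @: T by rewrite -eST imset_f.
by rewrite ey => /copy_inr[].
Qed.

Lemma copy_imset_inj (F f : {ffun 'I_n.+1 -> TC}) (S T : {set TB}) :
  injective F -> injective f -> #|S| = n.+1 -> #|T| = n.+1 ->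
  copy F @: S = copy f @: T -> S = T.
Proof.
move=> F_inj f_inj S_card T_card eST.
have [S_sub | /subsetPn[y yS y_new]] := boolP (S \subset i @: setT).
  have [T_sub | /subsetPn[y yT y_new]] := boolP (T \subset i @: setT).
    by rewrite (range_eq S_sub S_card) (range_eq T_sub T_card).
  exact: copy_imset_same_front F_inj f_inj (esym (copy_front_eq yT y_new (esym eST))) eST.
exact: copy_imset_same_front F_inj f_inj (copy_front_eq yS y_new eST) eST.
Qed.

Hypothesis EC_uniform : forall S, S \in EC -> #|S| = n.+1.
Hypothesis EB_uniform : forall S, S \in EB -> #|S| = n.+1.

Lemma ordered_edge_inj (f : {ffun 'I_n.+1 -> TC}) : ordered_edge f -> injective f.
Proof. by case/andP=> /injectiveP. Qed.

Lemma ext_edgesP (S : {set ext_vertex}) :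
  reflect ((exists2 S0, S0 \in EC & S = inl @: S0) \/
           exists2 f, ordered_edge f & exists2 T, T \in EB & S = copy f @: T)
          (S \in ext_edges).
Proof.
apply: (iffP setUP) => [[/imsetP[S0 S0C ->] | /bigcupP[f f_ord /imsetP[T T_edge ->]]] |].
- by left; exists S0.
- by right; exists f => //; exists T.
case=> [[S0 S0C ->] | [f f_ord [T T_edge ->]]]; first by left; exact: imset_f.
by right; apply/bigcupP; exists f => //; exact: imset_f.
Qed.

Lemma ext_edges_uniform S : S \in ext_edges -> #|S| = n.+1.
Proof.
case/ext_edgesP => [[S0 S0C ->] | [f f_ord [T T_edge ->]]].
  by rewrite card_imset ?EC_uniform //; exact: inl_inj.
by rewrite card_imset ?EB_uniform //; exact/copy_inj/ordered_edge_inj.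
Qed.

Lemma inl_embedding : is_embedding EC ext_edges inl.
Proof.
split=> [|S]; first exact: inl_inj.
apply/idP/ext_edgesP => [SC | [[S0 S0C /(imset_inj inl_inj) -> //] |]].
  by left; exists S.
case=> f /andP[_ fC] [T T_edge eTS].
have T_range := copy_eq_inl (EB_uniform T_edge) (esym eTS).
rewrite T_range copy_imset_range in eTS.
by rewrite (imset_inj inl_inj eTS).
Qed.

Hypothesis i_edge : i @: setT \in EB.

Lemma copy_embedding (F : {ffun 'I_n.+1 -> TC}) :
  ordered_edge F -> is_embedding EB ext_edges (copy F).
Proof.
move=> F_ord; have F_inj := ordered_edge_inj F_ord.
split; first exact: copy_inj.
move=> S; apply/idP/ext_edgesP => [SB | [[S0 S0C eS] | [f f_ord [T T_edge eS]]]].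
- by right; exists F => //; exists S.
- have S_card : #|S| = n.+1.
    by rewrite -(card_imset S (copy_inj F_inj)) eS card_imset ?EC_uniform //; exact: inl_inj.
  by rewrite (copy_eq_inl S_card eS).
- have S_card : #|S| = n.+1.
    by rewrite -(card_imset S (copy_inj F_inj)) eS card_imset ?EB_uniform //;
      exact/copy_inj/ordered_edge_inj.
  by rewrite (copy_imset_inj F_inj (ordered_edge_inj f_ord) S_card (EB_uniform T_edge) eS).
Qed.

End Amalgamation.

Lemma card_ext_vertex n N b :
  0 < n -> #|{: ext_vertex n 'I_N 'I_b}| <= b.+1 * N ^ n.
Proof.
move=> n_gt0; rewrite card_sum card_prod card_ffun !card_ord mulSn [b * _]mulnC leq_add2r.
case: N => // N; by rewrite -{1}(expn1 N.+1) leq_pexp2l.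
Qed.

Theorem mainTheorem19 :
  forall r : nat, 2 <= r ->
  forall b : nat, exists c : nat,
  forall (EB : {set {set 'I_b}}), uniform r EB ->
  forall i : 'I_r -> 'I_b, is_emb (single_edge r) EB i ->
  forall (N : nat) (EC : {set {set 'I_N}}), uniform r EC ->
  exists (d : nat) (ED : {set {set 'I_d}}) (j : 'I_N -> 'I_d),
    [/\ uniform r ED, is_emb EC ED j,
        extends_along (single_edge r) EB EC ED i j
      & d <= c * N ^ (r - 1)].
Proof.
case=> [// | n] n_gt0 b; exists b.+1 => EB EB_unif i i_emb N EC EC_unif.
have [i_inj i_edge] := single_edge_embedding i_emb.
exists _, (relabel (ext_edges EC EB i)), (enum_rank \o inl); split.
- exact/relabel_uniform/ext_edges_uniform.
- exact/relabel_embedding/inl_embedding.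
- move=> f /single_edge_embedding[f_inj fC].
  pose F := [ffun x => f x].
  have F_ord : ordered_edge EC F.
    apply/andP; split; first by apply/injectiveP => x y; rewrite !ffunE => /f_inj.
    by rewrite (eq_imset _ (ffunE _)).
  exists (enum_rank \o copy i F); split; first exact/relabel_embedding/copy_embedding.
  by move=> x /=; rewrite copy_image // ffunE.
- by rewrite subn1; exact: card_ext_vertex.
Qed.
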